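(* For every integer $k\ge 3$, the consensus number of the $\text{WRN}_{k}$ object is $1$.
   Context: A $\text{WRN}_{k}$ (Write and Read Next) object is a deterministic atomic shared object with a single operation $\texttt{WRN}(i,v)$, where $i\in\{0,\dots,k-1\}$ and $v\neq\bot$. Its state consists of $k$ values $A[0],\dots,A[k-1]$, initially all $\bot$; the operation $\texttt{WRN}(i,v)$ atomically sets $A[i]\gets v$ and returns $A[(i+1)\bmod k]$. Model: asynchronous shared memory, processes communicate by atomic operations on shared objects and may crash. Consensus task: each process has an input; every non-faulty process outputs a value such that every output is some process's input and all outputs are equal. An object has consensus number $n$ if there is a wait-free algorithm using only copies of the object and read-write registers solving consensus for $n$ processes, but no such algorithm for $n+1$ processes (wait-free: each non-crashed process outputs within finitely many of its own steps). *)

From mathcomp Require Import all_boot.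
Set Implicit Arguments. Unset Strict Implicit. Unset Printing Implicit Defensive.

(* State: A : 'I_k -> option Val  (None plays the role of bot).
   WRN(i, v) (v <> bot, i.e. v : Val) atomically sets A[i] <- v and
   returns A[(i+1) mod k]  (ordS i is (i+1) mod k in 'I_k). *)
Definition wrn_apply (k : nat) (Val : Type) (A : 'I_k -> option Val)
    (i : 'I_k) (v : Val) : ('I_k -> option Val) * option Val :=
  let A' := fun j : 'I_k => if j == i then Some v else A j in
  (A', A' (ordS i)).

Inductive action (k : nat) (In Val : Type) (RegObj WrnObj : Type) :=
  | Decide of In
  | Read of RegObj
  | Write of RegObj & Val
  | WRN of WrnObj & 'I_k & Val.

(* Responses: read returns Some v, write returns None (ack), WRN returns the
   (possibly bot) value read. Decide is terminal. *)
Unset Implicit Arguments.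
Record algorithm (k n : nat) (In : Type) := Algorithm {
  Val : Type;
  RegObj : eqType;
  WrnObj : eqType;
  reg_init : RegObj -> Val;
  Loc : Type;
  init : 'I_n -> In -> Loc;
  act : 'I_n -> Loc -> action k In Val RegObj WrnObj;
  upd : 'I_n -> Loc -> option Val -> Loc
}.
Arguments Val {k n In}.
Arguments RegObj {k n In}.
Arguments WrnObj {k n In}.
Arguments reg_init {k n In}.
Arguments Loc {k n In}.
Arguments init {k n In}.
Arguments act {k n In}.
Arguments upd {k n In}.
Set Implicit Arguments.

Section Semantics.
Variables (k n : nat) (In : Type) (A : algorithm k n In).

Record config := Config {
  loc : 'I_n -> Loc A;
  regs : RegObj A -> Val A;
  wrns : WrnObj A -> 'I_k -> option (Val A)
}.

Definition init_config (inp : 'I_n -> In) : config :=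
  Config (fun p => init A p (inp p)) (reg_init A) (fun _ _ => None).

Definition set_loc (c : config) (p : 'I_n) (s : Loc A) : 'I_n -> Loc A :=
  fun q => if q == p then s else loc c q.

Definition step (c : config) (p : 'I_n) : config :=
  let s := loc c p in
  match act A p s with
  | Decide _ => c
  | Read r =>
      Config (set_loc c p (upd A p s (Some (regs c r)))) (regs c) (wrns c)
  | Write r v =>
      Config (set_loc c p (upd A p s None))
             (fun r' => if r' == r then v else regs c r') (wrns c)
  | WRN w i v =>
      let res := wrn_apply (wrns c w) i v in
      Config (set_loc c p (upd A p s res.2)) (regs c)
             (fun w' => if w' == w then res.1 else wrns c w')
  end.

(* Execution with inputs inp under schedule sched (sched t is the process
   taking the t-th step; a crashed process is one scheduled finitely often). *)
Fixpoint run (inp : 'I_n -> In) (sched : nat -> 'I_n) (t : nat) : config :=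
  match t with
  | 0 => init_config inp
  | t'.+1 => step (run inp sched t') (sched t')
  end.

Definition decided (c : config) (p : 'I_n) (d : In) : Prop :=
  act A p (loc c p) = Decide _ _ _ _ d.

Definition solves_consensus : Prop :=
  (forall inp sched t p d, decided (run inp sched t) p d -> exists q, d = inp q) /\
  (forall inp sched t p q dp dq,
      decided (run inp sched t) p dp -> decided (run inp sched t) q dq -> dp = dq) /\
  (* wait-freedom: every non-crashed process (one taking infinitely many
     steps) outputs within finitely many steps *)
  (forall inp sched p, (forall t, exists2 t', t <= t' & sched t' = p) ->
      exists t d, decided (run inp sched t) p d).

End Semantics.

Definition consensus_solvable (k n : nat) (In : Type) : Prop :=
  exists A : algorithm k n In, solves_consensus A.

Definition consensus_number (k n : nat) : Prop :=
  (forall In : Type, consensus_solvable k n In) /\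
  (forall In : Type, (exists x y : In, x <> y) -> ~ consensus_solvable k n.+1 In).

From mathcomp Require Import all_boot zify.
From Stdlib Require Import Classical IndefiniteDescription FunctionalExtensionality.
Set Implicit Arguments. Unset Strict Implicit. Unset Printing Implicit Defensive.

(* Run two processes with inputs x <> y.  The initial configuration is
   bivalent (both x and y are still possible decisions), because a process
   running solo must decide its own input.  A reachable bivalent configuration
   has a bivalent successor: otherwise the steps of two processes p <> q lead
   to configurations from which only x, resp. only y, can be decided.  But for
   k >= 3, of any two operations on registers and WRN_k objects one is hidden
   from the process performing the other: it is overwritten, leaves the memory
   unchanged, or commutes with the other as far as that process can see.  A
   solo run of that process then decides the same value after both steps, a
   contradiction.  Iterating yields an infinite run through bivalent
   configurations, in which some process takes infinitely many steps without
   ever deciding, contradicting wait-freedom. *)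

Lemma val_ordS k (i : 'I_k) : nat_of_ord (ordS i) = if i.+1 < k then i.+1 else 0.
Proof.
case: ltnP => [lt|ge]; first exact: modn_small.
have e : i.+1 = k by apply/anti_leq; rewrite ge ltn_ord.
by rewrite /= e modnn.
Qed.

Lemma ordS_ordS_neq k (i : 'I_k) : 2 < k -> ordS (ordS i) != i.
Proof.
move=> k_gt2; apply/eqP => /(congr1 (@nat_of_ord k)); rewrite !val_ordS.
by have := ltn_ord i; case: ifP; case: ifP; lia.
Qed.

Lemma mkseq_nth_nseq (T : Type) (x : T) s m :
  mkseq (nth x s) (size s + m) = s ++ nseq m x.
Proof.
elim: m => [|m IH]; first by rewrite addn0 cats0 mkseq_nth.
by rewrite addnS mkseqS IH nth_default ?leq_addr // rcons_cat -cats1 -addn1 nseqD.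
Qed.

Section WrnObject.
Variables (k : nat) (V : Type).
Implicit Types (X : 'I_k -> option V) (i j : 'I_k) (u v : V).

Lemma wrn_apply_overwrite X i u v :
  wrn_apply (wrn_apply X i u).1 i v = wrn_apply X i v.
Proof.
rewrite /wrn_apply /=; congr (_, _); last by case: eqP.
by apply: functional_extensionality => j; case: eqP.
Qed.

Lemma wrn_apply_commute X i j u v : i != j ->
  (wrn_apply (wrn_apply X i u).1 j v).1 = (wrn_apply (wrn_apply X j v).1 i u).1.
Proof.
move=> ij; apply: functional_extensionality => l /=.
by case: (eqVneq l j) => [->|//]; rewrite eq_sym (negbTE ij).
Qed.

Lemma wrn_apply_response X i j u v : ordS j != i ->
  (wrn_apply (wrn_apply X i u).1 j v).2 = (wrn_apply X j v).2.
Proof. by move=> /negbTE ji /=; rewrite ji. Qed.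

End WrnObject.

Section Algorithm.
Variables (k n : nat) (In : Type) (A : algorithm k n In).
(* Keeps [/=] from unfolding the object, so that the [wrn_apply_*] lemmas apply. *)
Local Opaque wrn_apply.

Record memory := Memory {
  mregs : RegObj A -> Val A;
  mwrns : WrnObj A -> 'I_k -> option (Val A)
}.

Definition operation := action k In (Val A) (RegObj A) (WrnObj A).
Implicit Types (a b : operation).

Definition decides a := if a is Decide _ then true else false.

Definition update a (m : memory) : memory :=
  match a with
  | Write r v => Memory (fun r' => if r' == r then v else mregs m r') (mwrns m)
  | WRN w i v =>
      Memory (mregs m)
             (fun w' => if w' == w then (wrn_apply (mwrns m w) i v).1 else mwrns m w')
  | _ => m
  end.

Definition response a (m : memory) : option (Val A) :=
  match a with
  | Read r => Some (mregs m r)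
  | WRN w i v => (wrn_apply (mwrns m w) i v).2
  | _ => None
  end.

Definition op_hidden a b (m : memory) :=
  response b (update a m) = response b m /\
  (update b (update a m) = update b m \/ update b (update a m) = update a (update b m)).

Lemma quiet_op_hidden a b (m : memory) : update a m = m -> op_hidden a b m.
Proof. by rewrite /op_hidden => ->; split=> //; left. Qed.

Lemma op_hidden_or a b (m : memory) : 2 < k -> op_hidden a b m \/ op_hidden b a m.
Proof.
move=> k_gt2; case: m => R W.
case: a => [d|r|r u|w i u]; try by left; apply: quiet_op_hidden.
all: case: b => [d'|r'|r' v|w' j v]; try by right; apply: quiet_op_hidden.
all: rewrite /op_hidden /=; try by left; split=> //; right.
- left; split => //.
  have [<-|rr'] := eqVneq r r'; [left|right]; congr Memory;
    apply: functional_extensionality => x; first by case: eqP.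
  by case: (eqVneq x r') => [->|//]; rewrite eq_sym (negbTE rr').
- have [<-|ww'] := eqVneq w w'; last first.
    left; split => //; right.
    congr Memory; apply: functional_extensionality => x.
    by case: (eqVneq x w') => [->|//]; rewrite eq_sym (negbTE ww').
  have same_object X Y :
      (fun x => if x == w then X else if x == w then Y else W x) =
      (fun x => if x == w then X else W x).
    by apply: functional_extensionality => x; case: eqP.
  have [<-|ij] := eqVneq i j.
    by left; rewrite wrn_apply_overwrite !same_object; split => //; left.
  have [ji|/negPn/eqP ji] := boolP (ordS j != i).
    left; rewrite wrn_apply_response // wrn_apply_commute // !same_object.
    by split => //; right.
  (* The only use of k > 2: WRN(j) reads the cell written by WRN(i), so
     WRN(i) reads cell j + 2, which is not the cell j written by WRN(j). *)
  have ij' : ordS i != j by rewrite -ji ordS_ordS_neq.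
  right; rewrite wrn_apply_response // wrn_apply_commute 1?eq_sym // !same_object.
  by split => //; right.
Qed.

Implicit Types (c : config A) (p q r : 'I_n) (l : seq 'I_n).

Definition mem c := Memory (regs c) (wrns c).

Definition exec c l : config A := foldl (@step _ _ _ A) c l.

Lemma exec_cat c l1 l2 : exec c (l1 ++ l2) = exec (exec c l1) l2.
Proof. exact: foldl_cat. Qed.

Lemma run_exec inp sched t :
  run A inp sched t = exec (init_config A inp) (mkseq sched t).
Proof. by elim: t => // t IH; rewrite [run _ _ _ _]/= mkseqS /exec foldl_rcons IH. Qed.

Lemma step_decides c p : decides (act A p (loc c p)) -> step c p = c.
Proof. by rewrite /step; case: act. Qed.

Lemma mem_step c p : mem (step c p) = update (act A p (loc c p)) (mem c).
Proof. by rewrite /step; case: act. Qed.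

Lemma loc_step c p : ~~ decides (act A p (loc c p)) ->
  loc (step c p) p = upd A p (loc c p) (response (act A p (loc c p)) (mem c)).
Proof. by rewrite /step; case: act => //= *; rewrite /set_loc eqxx. Qed.

Lemma loc_step_other c p q : q != p -> loc (step c p) q = loc c q.
Proof. by move=> /negbTE qp; rewrite /step; case: act => * //=; rewrite /set_loc qp. Qed.

Lemma decided_step c p q d : decided c p d -> decided (step c q) p d.
Proof.
move=> dec; have [<-|pq] := eqVneq p q; first by rewrite step_decides ?dec.
by rewrite /decided loc_step_other.
Qed.

Lemma decided_exec c l p d : decided c p d -> decided (exec c l) p d.
Proof. by elim: l c => //= q l IH c /(decided_step q) /IH. Qed.

Lemma decided_run_le inp sched t t' p d : t <= t' ->
  decided (run A inp sched t) p d -> decided (run A inp sched t') p d.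
Proof.
move=> /subnK <-; elim: (t' - t) => // j IH /IH.
by rewrite addSn; apply: decided_step.
Qed.

Definition indist q c c' := loc c q = loc c' q /\ mem c = mem c'.

Lemma indist_step q c c' : indist q c c' -> indist q (step c q) (step c' q).
Proof.
case=> eL eM; have [dq|dq] := boolP (decides (act A q (loc c q))).
  by rewrite !step_decides -?eL.
have dq' : ~~ decides (act A q (loc c' q)) by rewrite -eL.
by split; [rewrite !loc_step // eL eM | rewrite !mem_step eL eM].
Qed.

Lemma indist_solo q c c' m :
  indist q c c' -> indist q (exec c (nseq m q)) (exec c' (nseq m q)).
Proof. by elim: m c c' => //= m IH c c' /indist_step /IH. Qed.

Lemma indist_decided q c c' d : indist q c c' -> decided c q d -> decided c' q d.
Proof. by case=> eL _; rewrite /decided eL. Qed.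

Definition step_hidden c p q :=
  indist q (step (step c p) q) (step c q) \/
  indist q (step (step c p) q) (step (step c q) p).

Lemma step_hidden_of_op c p q : p != q -> ~~ decides (act A q (loc c q)) ->
  op_hidden (act A p (loc c p)) (act A q (loc c q)) (mem c) -> step_hidden c p q.
Proof.
move=> pq dq [resp hidden]; have qp : q != p by rewrite eq_sym.
have dq' : ~~ decides (act A q (loc (step c p) q)) by rewrite loc_step_other.
have loc_pq : loc (step (step c p) q) q = loc (step c q) q.
  by rewrite !loc_step // loc_step_other // mem_step resp.
rewrite /step_hidden /indist !mem_step !(loc_step_other _ qp) (loc_step_other _ pq).
by case: hidden => ->; [left|right].
Qed.

Lemma step_hidden_or c p q : 2 < k -> p != q -> step_hidden c p q \/ step_hidden c q p.
Proof.
move=> k_gt2 pq.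
have decider_hidden r r' : decides (act A r (loc c r)) -> step_hidden c r r'.
  by rewrite /step_hidden => /step_decides->; left.
have [/decider_hidden|dq] := boolP (decides (act A q (loc c q))); first by right.
have [/decider_hidden|dp] := boolP (decides (act A p (loc c p))); first by left.
have [hpq|hqp] := op_hidden_or (act A p (loc c p)) (act A q (loc c q)) (mem c) k_gt2.
  by left; apply: step_hidden_of_op.
by right; apply: step_hidden_of_op; rewrite // eq_sym.
Qed.

Lemma exists_invariant_schedule (P : config A -> Prop) inp :
  P (init_config A inp) -> (forall c, P c -> exists p, P (step c p)) ->
  exists sched, forall t, P (run A inp sched t).
Proof.
move=> P0 HP; have [p0 _] := HP _ P0.
have [next Hnext] : exists next, forall c, P c -> P (step c (next c)).
  apply: (functional_choice (fun c p => P c -> P (step c p))) => c.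
  have [/HP [p Hp]|nPc] := classic (P c); first by exists p.
  by exists p0 => /nPc.
pose fix cfg t := if t is t'.+1 then step (cfg t') (next (cfg t')) else init_config A inp.
exists (next \o cfg) => t.
have -> : run A inp (next \o cfg) t = cfg t by elim: t => //= t ->.
by elim: t => //= t /Hnext.
Qed.

Definition fair (sched : nat -> 'I_n) p := forall t, exists2 t', t <= t' & sched t' = p.

Lemma exists_fair (sched : nat -> 'I_n) : exists p, fair sched p.
Proof.
apply: NNPP => none.
have [bound Hbound] : exists bound, forall p t, bound p <= t -> sched t != p.
  apply: (functional_choice (fun p t0 => forall t, t0 <= t -> sched t != p)) => p.
  have /not_all_ex_not [t0 Ht0] : ~ fair sched p by move=> f; apply: none; exists p.
  by exists t0 => t le; apply/eqP => e; apply: Ht0; exists t.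
pose T := \max_p bound p.
by have /eqP := Hbound (sched T) T (leq_bigmax _).
Qed.

Section Consensus.
Hypothesis solved : solves_consensus A.

Lemma exec_validity inp l p d :
  decided (exec (init_config A inp) l) p d -> exists q, d = inp q.
Proof.
case: solved => valid _; rewrite -[l](mkseq_nth p) -run_exec.
exact: valid.
Qed.

Lemma exec_agreement inp l p q dp dq :
  decided (exec (init_config A inp) l) p dp ->
  decided (exec (init_config A inp) l) q dq -> dp = dq.
Proof.
case: solved => _ [agree _]; rewrite -[l](mkseq_nth p) -run_exec.
exact: agree.
Qed.

Lemma solo_termination inp l q :
  exists m d, decided (exec (init_config A inp) (l ++ nseq m q)) q d.
Proof.
case: solved => _ [_ wait_free].
have fair_q : fair (nth q l) q.
  by move=> t; exists (t + size l); rewrite ?leq_addr // nth_default ?leq_addl.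
have [t [d dec]] := wait_free inp _ q fair_q.
exists t, d.
have := decided_run_le (leq_addl (size l) t) dec.
by rewrite run_exec mkseq_nth_nseq.
Qed.

Lemma solo_decides_input inp p :
  exists m, decided (exec (init_config A inp) (nseq m p)) p (inp p).
Proof.
have [m [d dec]] := solo_termination (fun=> inp p) [::] p.
have [_ /= ed] := exec_validity dec; subst d.
by exists m; apply: indist_decided dec; apply: indist_solo.
Qed.

End Consensus.
End Algorithm.

Section Bivalence.
Variables (k n : nat) (In : Type) (A : algorithm k n In).
Hypotheses (k_gt2 : 2 < k) (solved : solves_consensus A).
Variables (p0 p1 : 'I_n) (x y : In).
Hypotheses (p01 : p0 != p1) (xy : x <> y).
Implicit Types (c : config A) (p q : 'I_n) (l : seq 'I_n).

Let inp p := if p == p0 then x else y.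
Let c0 := init_config A inp.

Definition can_decide c v := exists l p, decided (exec c l) p v.
Definition bivalent c := can_decide c x /\ can_decide c y.
Definition reachable c := exists l, c = exec c0 l.

Lemma reachable_step c p : reachable c -> reachable (step c p).
Proof. by case=> l ->; exists (rcons l p); rewrite -cats1 exec_cat. Qed.

Lemma can_decide_step c p v : can_decide (step c p) v -> can_decide c v.
Proof. by case=> l [q dec]; exists (p :: l), q. Qed.

Lemma can_decide_inputs c v : reachable c -> can_decide c v -> v = x \/ v = y.
Proof.
case=> l0 -> [l [p]]; rewrite -exec_cat => /(exec_validity solved) [q ->].
by rewrite /inp; case: eqP; [left|right].
Qed.

Lemma bivalent_undecided c p d : reachable c -> bivalent c -> ~ decided c p d.
Proof.
case=> l0 -> [[lx [px decx]] [ly [py decy]]] dec; apply: xy.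
have agree l q v : decided (exec (exec c0 l0) l) q v -> d = v.
  rewrite -exec_cat; apply: (exec_agreement solved).
  by rewrite exec_cat; apply: decided_exec dec.
by rewrite -(agree _ _ _ decx) (agree _ _ _ decy).
Qed.

Lemma indist_common_decision q c c' :
  reachable c -> indist q c c' -> exists v, can_decide c v /\ can_decide c' v.
Proof.
case=> l0 -> same_view.
have [m [d dec]] := solo_termination solved inp l0 q; rewrite exec_cat in dec.
exists d; split; first by exists (nseq m q), q.
by exists (nseq m q), q; apply: indist_decided dec; apply: indist_solo.
Qed.

Lemma hidden_common_decision c p q : reachable c -> step_hidden c p q ->
  exists v, can_decide (step c p) v /\ can_decide (step c q) v.
Proof.
move=> Rc hidden.
have Rpq : reachable (step (step c p) q) by apply/reachable_step/reachable_step.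
case: hidden => /(indist_common_decision Rpq) [v [Vpq V]]; exists v.
  by split; [apply: can_decide_step Vpq | exact: V].
by split; [apply: can_decide_step Vpq | apply: can_decide_step V].
Qed.

Lemma bivalent_first_step c v : reachable c -> bivalent c -> can_decide c v ->
  exists p, can_decide (step c p) v.
Proof.
move=> Rc Bc [[|p l] [q dec]]; first by case: (bivalent_undecided Rc Bc dec).
by exists p, l, q.
Qed.

Lemma bivalent_step c : reachable c -> bivalent c -> exists p, bivalent (step c p).
Proof.
move=> Rc Bc.
have [p Xp] := bivalent_first_step Rc Bc Bc.1.
have [q Yq] := bivalent_first_step Rc Bc Bc.2.
have [Yp|nYp] := classic (can_decide (step c p) y); first by exists p.
have [Xq|nXq] := classic (can_decide (step c q) x); first by exists q.
have [epq|pq] := eqVneq p q; first by subst q.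
have [v [Vp Vq]] : exists v, can_decide (step c p) v /\ can_decide (step c q) v.
  case: (step_hidden_or c k_gt2 pq) => /(hidden_common_decision Rc) // [v [Vq Vp]].
  by exists v.
by case: (can_decide_inputs (reachable_step p Rc) Vp) => ev; subst v.
Qed.

Lemma bivalent_init : bivalent c0.
Proof.
have solo p : can_decide c0 (inp p).
  by have [m dec] := solo_decides_input solved inp p; exists (nseq m p), p.
split; [have := solo p0 | have := solo p1]; rewrite /inp ?eqxx //.
by rewrite eq_sym (negbTE p01).
Qed.

Lemma no_wait_free_consensus : False.
Proof.
pose P c := reachable c /\ bivalent c.
have P_step c : P c -> exists p, P (step c p).
  case=> Rc Bc; have [p Bp] := bivalent_step Rc Bc.
  by exists p; split => //; apply: reachable_step.
have P_init : P c0 by split; [exists [::] | exact: bivalent_init].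
have [sched Psched] := exists_invariant_schedule P_init P_step.
have [p fair_p] := exists_fair sched.
have [_ [_ wait_free]] := solved.
have [t [d dec]] := wait_free inp sched p fair_p.
by have [Rt Bt] := Psched t; apply: bivalent_undecided Rt Bt dec.
Qed.

End Bivalence.

Definition decide_own_input k In : algorithm k 1 In :=
  @Algorithm k 1 In unit unit unit (fun=> tt) In (fun _ v => v)
    (fun _ v => Decide _ _ _ _ v) (fun _ v _ => v).

Lemma decide_own_input_solves k In : solves_consensus (decide_own_input k In).
Proof.
have run_init inp sched t : run (decide_own_input k In) inp sched t = init_config _ inp.
  by elim: t => //= t ->.
split; [|split].
- by move=> inp sched t p d; rewrite run_init => -[<-]; exists p.
- by move=> inp sched t p q dp dq; rewrite run_init (ord1 p) (ord1 q) => -[<-] [<-].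
- by move=> inp sched p _; exists 0, (inp p).
Qed.

Theorem corollary2 : forall k : nat, 3 <= k -> consensus_number k 1.
Proof.
move=> k k_gt2; split=> [In | In [x [y xy]] [A solved]].
  by exists (decide_own_input k In); apply: decide_own_input_solves.
exact: (@no_wait_free_consensus _ _ _ _ k_gt2 solved ord0 ord_max x y isT xy).
Qed.
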